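(* Let $q$ be a prime power and $\eta\ge2$, $(\delta_T,\delta_X)\in\mathbb{Z}\times\mathbb{N}$ with $\delta_T<0$, $\eta\mid\delta_T$ and $q\le\delta/\eta$, where $\delta=\delta_T+\eta\delta_X$. Write $\delta/\eta=k(q-1)+r$ with $k\in\mathbb{N}$ and $r\in\{1,\dots,q-1\}$. Then the polynomial \[F_0=X_1^{-\delta_T/\eta}X_2^{\delta/\eta}-T_1^{\eta k(q-1)}X_1^{k(q-1)-\delta_T/\eta}X_2^{r}+T_1^{(\eta k-1)(q-1)}T_2^{q-1}X_1^{k(q-1)-\delta_T/\eta}X_2^{r}-T_2^{\eta k(q-1)}X_1^{k(q-1)-\delta_T/\eta}X_2^{r}\] lies in the kernel of $\mathrm{ev}_{(\delta_T,\delta_X)}$, i.e. it vanishes at every $\mathbb{F}_q$-rational point of $\mathcal{H}_\eta$.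
   Context: $R=\mathbb{F}_q[T_1,T_2,X_1,X_2]$; the bidegree of $T_1^{c_1}T_2^{c_2}X_1^{d_1}X_2^{d_2}$ is $(c_1+c_2-\eta d_1,d_1+d_2)$ ($F_0$ has bidegree $(\delta_T,\delta_X)$). The Hirzebruch surface $\mathcal{H}_\eta$ is the quotient of $(\mathbb{A}^2\setminus\{0\})^2$ by $\mathbb{G}_m^2$ acting by $(\lambda,\mu)\cdot(t_1,t_2,x_1,x_2)=(\lambda t_1,\lambda t_2,\mu\lambda^{-\eta}x_1,\mu x_2)$; each of its $\mathbb{F}_q$-points has a unique representative of the form $(1,a,1,b)$, $(0,1,1,b)$, $(1,a,0,1)$ or $(0,1,0,1)$ ($a,b\in\mathbb{F}_q$), where polynomials are evaluated; $\mathrm{ev}_{(\delta_T,\delta_X)}$ maps a bidegree-$(\delta_T,\delta_X)$ polynomial to its vector of values at these points. *)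

From mathcomp Require Import all_boot all_order all_algebra all_field.
From mathcomp Require Import mpoly.
Set Implicit Arguments. Unset Strict Implicit. Unset Printing Implicit Defensive.
Import Order.TTheory GRing.Theory Num.Theory.
Local Open Scope ring_scope.

Definition iT1 : 'I_4 := @Ordinal 4 0 isT.
Definition iT2 : 'I_4 := @Ordinal 4 1 isT.
Definition iX1 : 'I_4 := @Ordinal 4 2 isT.
Definition iX2 : 'I_4 := @Ordinal 4 3 isT.

Definition pt4 (F : nzRingType) (t1 t2 x1 x2 : F) : 'I_4 -> F :=
  fun i => nth 0 [:: t1; t2; x1; x2] i.

(* The integer exponents -dT/eta and d/eta are
   nonnegative under the hypotheses of the lemma; they are converted to nat
   via absz. *)
Definition F0 (F : nzRingType) (q eta : nat) (dT : int) (dX k r : nat)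
  : {mpoly F[4]} :=
  let e := `|((- dT) %/ eta%:Z)%Z|%N in
  let dd := `|((dT + (eta * dX)%N%:Z) %/ eta%:Z)%Z|%N in
  let M := 'X_iX1 ^+ (k * (q - 1) + e) * 'X_iX2 ^+ r in
  'X_iX1 ^+ e * 'X_iX2 ^+ dd
  - 'X_iT1 ^+ (eta * k * (q - 1)) * M
  + 'X_iT1 ^+ ((eta * k - 1) * (q - 1)) * 'X_iT2 ^+ (q - 1) * M
  - 'X_iT2 ^+ (eta * k * (q - 1)) * M.

(* p lies in the kernel of ev: p vanishes at the chosen representatives
   (1,a,1,b), (0,1,1,b), (1,a,0,1), (0,1,0,1) of all F_q-points of H_eta. *)
Definition in_ker_ev (F : nzRingType) (p : {mpoly F[4]}) : Prop :=
  forall a b : F,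
    [/\ p.@[pt4 1 a 1 b] = 0, p.@[pt4 0 1 1 b] = 0,
        p.@[pt4 1 a 0 1] = 0 & p.@[pt4 0 1 0 1] = 0].

From mathcomp Require Import all_boot all_order all_algebra all_field.
From mathcomp Require Import mpoly zify.
Import Order.TTheory GRing.Theory Num.Theory.
Local Open Scope ring_scope.

(* Over F_q every exponent n >= 1 acts like its residue in {1, ..., q - 1}
   (since x^q = x).  At a point with x1 = 0 each monomial of F0 contains X1
   and vanishes.  At a point with x1 = 1 the leading term X2^(d/eta) equals
   X2^r, and F0 reduces to (1 - t1^(eta k (q-1)) + t1^((eta k - 1)(q-1))
   t2^(q-1) - t2^(eta k (q-1))) X2^r; the bracket vanishes at t1 = 1 because
   a^(eta k (q-1)) = a^(q-1), and at t1 = 0, t2 = 1 because both exponents of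
   t1 are positive (this uses eta >= 2 and k >= 1, i.e. q <= d/eta). *)

Section CardPowers.

Variable F : finFieldType.

Lemma cardB1_gt0 : (0 < #|F| - 1)%N.
Proof. by rewrite subn_gt0 card_finNzRing_gt1. Qed.

Lemma expf_cardB1 (x : F) : x != 0 -> x ^+ (#|F| - 1) = 1.
Proof.
move=> x_neq0; apply: (mulfI x_neq0); rewrite mulr1 -exprS.
by rewrite subn1 prednK ?expf_card // ltnW // card_finNzRing_gt1.
Qed.

Lemma expf_mul_cardB1D (x : F) (m r : nat) :
  (0 < r)%N -> x ^+ (m * (#|F| - 1) + r) = x ^+ r.
Proof.
move=> r_gt0; have [->|x_neq0] := eqVneq x 0.
  by rewrite !expr0n !addn_eq0 (gtn_eqF r_gt0) andbF.
by rewrite exprD mulnC exprM expf_cardB1 // expr1n mul1r.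
Qed.

Lemma expf_mul_cardB1 (x : F) (n : nat) :
  (0 < n)%N -> x ^+ (n * (#|F| - 1)) = x ^+ (#|F| - 1).
Proof.
move=> n_gt0.
by rewrite -(prednK n_gt0) mulSn addnC expf_mul_cardB1D ?cardB1_gt0.
Qed.

End CardPowers.

Theorem lemma2p15 (F : finFieldType) (q eta : nat) (dT : int) (dX k r : nat) :
  #|F| = q ->
  (2 <= eta)%N ->
  dT < 0 ->
  (eta%:Z %| dT)%Z ->
  q%:Z <= ((dT + (eta * dX)%N%:Z) %/ eta%:Z)%Z ->
  ((dT + (eta * dX)%N%:Z) %/ eta%:Z)%Z = (k * (q - 1) + r)%N%:Z ->
  (1 <= r <= q - 1)%N ->
  in_ker_ev (@F0 F q eta dT dX k r).
Proof.
move=> <- eta_ge2 dT_lt0 /dvdzP [m dT_eq] q_le_d d_eq /andP [r_gt0 r_le].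
have e_gt0 : (0 < `|((- dT) %/ eta%:Z)%Z|)%N.
  rewrite dT_eq -mulNr mulzK; last by apply/eqP; lia.
  by move: dT_lt0; rewrite dT_eq; nia.
have k_gt0 : (0 < k)%N by move: q_le_d; rewrite d_eq; nia.
have ek_gt0 : (0 < eta * k)%N by rewrite muln_gt0 k_gt0; lia.
have ek1_gt0 : (0 < eta * k - 1)%N by nia.
rewrite /F0 d_eq absz_nat; set e := `|_|%N in e_gt0 *.
move=> a b; rewrite !(mevalB, mevalD, mevalM, rmorphXn) /= !mevalXU /pt4 /=.
rewrite !expf_mul_cardB1 // !expf_mul_cardB1D // !expr1n !expr0n.
rewrite (gtn_eqF e_gt0) (gtn_eqF (cardB1_gt0 F)).
split; rewrite ?(mulr0n, mul0r, mulr0, mul1r, subrr, subr0, add0r) //.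
by rewrite addr0 subrr.
Qed.
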